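(* Let $d\ge2$, $\kappa,l>0$, $V$, $\rho$ and $W(\phi;\nu)$ ($\nu\ge-1$) as in the context, and $c>0$. On the region $\rho\in(0,1)$ consider the Euclidean metric and scalar $$ds^2=\Big(\frac{3l}{d}\Big)^2\frac{1+\nu\rho+\sqrt{1+2\nu\rho+\rho^2}}{2\rho^2\sqrt{1-\rho^2}\,(1+2\nu\rho+\rho^2)}d\rho^2+c^2\Big(\frac{\sqrt{1-\rho^2}}{2\rho^2}\big(1+\nu\rho+\sqrt{1+2\nu\rho+\rho^2}\big)\Big)^{3/d}dx^idx^i,\qquad \phi=\frac32\sqrt{\frac{d-1}{d\kappa^2}}\tanh^{-1}\rho,$$ with $x\in\mathbb R^d$. Writing the metric as $dr^2+e^{2A(r)}dx^idx^i$ with $r$ the proper radial coordinate increasing as $\rho\to0^+$, this configuration satisfies the first order equations $\frac{dA}{dr}=-\frac{\kappa^2}{d-1}W(\phi;\nu)$, $\frac{d\phi}{dr}=\partial_\phi W(\phi;\nu)$, and hence solves the Euler–Lagrange equations of $S=\int d^{d+1}x\sqrt g\big(-\frac{1}{2\kappa^2}R+\frac12g^{\mu\nu}\partial_\mu\phi\partial_\nu\phi+V(\phi)\big)$. Moreover $c=\big(\frac23\sqrt{\frac{d\kappa^2}{d-1}}\phi_-\big)^{3/d}$, where $\phi\sim e^{-dr/3l}\phi_-$ as $r\to\infty$.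
   Context: $V(\phi)=-\frac{d(d-1)}{2\kappa^2l^2}\cosh\big(\frac23\sqrt{\frac{d\kappa^2}{d-1}}\phi\big)$, $\rho=\tanh\big(\frac23\sqrt{\frac{d\kappa^2}{d-1}}\phi\big)$, and $W(\phi;\nu)=-\frac{d-1}{\kappa^2l}(1-\rho^2)^{-3/4}\frac{1-\rho^2+\sqrt{1+2\nu\rho+\rho^2}}{\sqrt{2(1+\nu\rho+\sqrt{1+2\nu\rho+\rho^2})}}$, which is known to satisfy $V=\frac12(W'^2-\frac{d\kappa^2}{d-1}W^2)$. *)

From Stdlib Require Import Reals.
From Coquelicot Require Import Coquelicot.
Open Scope R_scope.

Definition kcoef (d : nat) (kappa : R) : R :=
  sqrt (INR d * kappa ^ 2 / (INR d - 1)).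

Definition atanh (x : R) : R := / 2 * ln ((1 + x) / (1 - x)).

Definition rho_of_phi (d : nat) (kappa phi : R) : R :=
  tanh (2 / 3 * kcoef d kappa * phi).

Definition Vpot (d : nat) (kappa l phi : R) : R :=
  - (INR d * (INR d - 1)) / (2 * kappa ^ 2 * l ^ 2)
    * cosh (2 / 3 * kcoef d kappa * phi).

Definition Sq (nu rho : R) : R := sqrt (1 + 2 * nu * rho + rho ^ 2).

Definition Wsup (d : nat) (kappa l nu phi : R) : R :=
  let rho := rho_of_phi d kappa phi in
  - (INR d - 1) / (kappa ^ 2 * l)
    * Rpower (1 - rho ^ 2) (- (3 / 4))
    * (1 - rho ^ 2 + Sq nu rho)
    / sqrt (2 * (1 + nu * rho + Sq nu rho)).

Definition g_rhorho (d : nat) (l nu rho : R) : R :=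
  (3 * l / INR d) ^ 2
  * (1 + nu * rho + Sq nu rho)
  / (2 * rho ^ 2 * sqrt (1 - rho ^ 2) * (1 + 2 * nu * rho + rho ^ 2)).

Definition g_xx (d : nat) (nu c rho : R) : R :=
  c ^ 2 * Rpower (sqrt (1 - rho ^ 2) / (2 * rho ^ 2) * (1 + nu * rho + Sq nu rho))
                 (3 / INR d).

Definition A_rho (d : nat) (nu c rho : R) : R := ln (g_xx d nu c rho) / 2.

Definition phi_rho (d : nat) (kappa rho : R) : R :=
  3 / 2 * sqrt ((INR d - 1) / (INR d * kappa ^ 2)) * atanh rho.

(* r is a proper radial coordinate on rho in (0,1), increasing as rho -> 0+ :
   dr = - sqrt(g_rhorho) drho *)
Definition radial_coord (d : nat) (l nu : R) (r : R -> R) : Prop :=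
  forall rho, 0 < rho < 1 -> is_derive r rho (- sqrt (g_rhorho d l nu rho)).

(* Fefferman-Graham normalisation of the additive constant in r:
   A(r) - r/l -> 0 as r -> +oo (i.e. as rho -> 0+) *)
Definition radial_normalized (d : nat) (l nu c : R) (r : R -> R) : Prop :=
  filterlim (fun rho => A_rho d nu c rho - r rho / l) (at_right 0) (locally 0).

From Stdlib Require Import Reals Lra Nsatz Ranalysis5.
From Coquelicot Require Import Coquelicot.
Open Scope R_scope.

(* With q = (1 - rho^2)^(1/4), S = sqrt(1 + 2 nu rho + rho^2) and T = sqrt(2 (1 + nu rho + S)),
   W, W', V, sqrt g_rhorho, A and dA/drho are all rational in rho, q, S, T.  Since
   dr = - sqrt g_rhorho drho, the first-order equations become identities in rho which hold modulo
   q^4 = 1 - rho^2, S^2 = 1 + 2 nu rho + rho^2 and T^2 = 2 (1 + nu rho + S).  Differentiating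
   them once more and using V = (W'^2 - d kappa^2/(d-1) W^2)/2 gives the Euler-Lagrange equations.
   Writing sqrt g_rhorho = (3l/d) (1/rho + K rho) with K regular at 0, the coordinate
   r = l ln c - (3l/d) (ln rho + int_0^rho K) satisfies A - r/l -> 0.  For any such normalised r,
   r -> +oo as rho -> 0+ and
   phi e^(d r / 3l) = (3/2k) (atanh rho / rho) c^(d/3) e^(A_reg/2) e^(-(d/3)(A - r/l)) -> (3/2k) c^(d/3),
   where k = sqrt(d kappa^2/(d-1)) and A_reg = (2d/3)(A - ln c) + 2 ln rho -> 0. *)

Ltac positivity :=
  repeat first [ assumption | apply exp_pos | apply Rmult_lt_0_compat
               | apply Rinv_0_lt_compat | apply pow_lt | apply sqrt_lt_R0 ]; try lra.

Ltac side_conditions := repeat split; try apply Rgt_not_eq; positivity; nra.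

Lemma tanh_exp x : tanh x = (exp x ^ 2 - 1) / (exp x ^ 2 + 1).
Proof.
unfold tanh, sinh, cosh; rewrite exp_Ropp.
pose proof (exp_pos x); field; split; nra.
Qed.

Lemma tanh_bounds x : -1 < tanh x < 1.
Proof.
rewrite tanh_exp; pose proof (exp_pos x).
split; [apply Rlt_div_r | apply Rlt_div_l]; nra.
Qed.

Lemma tanh_pos x : 0 < x -> 0 < tanh x.
Proof.
intros Hx; rewrite tanh_exp.
assert (1 < exp x) by (rewrite <- exp_0; apply exp_increasing; exact Hx).
apply Rdiv_lt_0_compat; nra.
Qed.

Lemma is_derive_tanh x : is_derive tanh x (1 - tanh x ^ 2).
Proof.
unfold tanh, sinh, cosh; auto_derive.
- pose proof (exp_pos x); pose proof (exp_pos (- x)); lra.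
- rewrite exp_Ropp; pose proof (exp_pos x); field; split; [lra | nra].
Qed.

Lemma cosh_tanh x : cosh x = / sqrt (1 - tanh x ^ 2).
Proof.
assert (Hc : 0 < cosh x).
{ unfold cosh; pose proof (exp_pos x); pose proof (exp_pos (- x)); lra. }
replace (1 - tanh x ^ 2) with ((/ cosh x) ^ 2).
- rewrite sqrt_pow2; [field; side_conditions | apply Rlt_le; positivity].
- unfold tanh, sinh, cosh in *; rewrite exp_Ropp in *.
  pose proof (exp_pos x); field; side_conditions.
Qed.

Lemma tanh_atanh x : -1 < x < 1 -> tanh (atanh x) = x.
Proof.
intros Hx; rewrite tanh_exp; unfold atanh.
replace (exp (/ 2 * ln ((1 + x) / (1 - x))) ^ 2) with (exp (ln ((1 + x) / (1 - x)))).
- rewrite exp_ln; [field; lra | apply Rdiv_lt_0_compat; lra].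
- simpl; rewrite Rmult_1_r, <- exp_plus; f_equal; field.
Qed.

Lemma is_derive_atanh x : -1 < x < 1 -> is_derive atanh x (/ (1 - x ^ 2)).
Proof.
intros Hx; unfold atanh; auto_derive.
- repeat split; try lra; apply Rdiv_lt_0_compat; lra.
- field; repeat split; nra.
Qed.

Lemma atanh_pos x : 0 < x < 1 -> 0 < atanh x.
Proof.
intros Hx; unfold atanh; apply Rmult_lt_0_compat; [lra |].
rewrite <- ln_1; apply ln_increasing; [lra | apply Rlt_div_r; lra].
Qed.

Lemma atanh_0 : atanh 0 = 0.
Proof. unfold atanh; rewrite Rplus_0_r, Rminus_0_r, Rdiv_1_l, Rinv_1, ln_1; ring. Qed.

Lemma is_derive_comp_R (f g : R -> R) x df dg dfg :
  is_derive f (g x) df -> is_derive g x dg -> dfg = dg * df ->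
  is_derive (fun y => f (g y)) x dfg.
Proof. intros Hf Hg ->; apply (is_derive_comp f g x df dg Hf Hg). Qed.

Lemma is_derive_linear a x : is_derive (fun y => a * y) x a.
Proof. auto_derive; [exact I | ring]. Qed.

Lemma filterlim_Rmult {T} {F : (T -> Prop) -> Prop} {FF : Filter F} (f g : T -> R) a b :
  filterlim f F (locally a) -> filterlim g F (locally b) ->
  filterlim (fun x => f x * g x) F (locally (a * b)).
Proof. intros Hf Hg; apply (filterlim_comp_2 f g Rmult Hf Hg), (filterlim_mult a b). Qed.

Lemma filterlim_Rplus {T} {F : (T -> Prop) -> Prop} {FF : Filter F} (f g : T -> R) a b :
  filterlim f F (locally a) -> filterlim g F (locally b) ->
  filterlim (fun x => f x + g x) F (locally (a + b)).
Proof. intros Hf Hg; apply (filterlim_comp_2 f g Rplus Hf Hg), (filterlim_plus a b). Qed.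

Lemma filterlim_Rplus_p_infty {T} {F : (T -> Prop) -> Prop} {FF : Filter F} (f g : T -> R) a :
  filterlim f F (locally a) -> filterlim g F (Rbar_locally p_infty) ->
  filterlim (fun x => f x + g x) F (Rbar_locally p_infty).
Proof.
intros Hf Hg; apply (filterlim_comp_2 f g Rplus Hf Hg).
apply (filterlim_Rbar_plus a p_infty p_infty); reflexivity.
Qed.

Lemma filterlim_scal_p_infty {T} {F : (T -> Prop) -> Prop} (a : R) (f : T -> R) :
  0 < a -> filterlim f F (Rbar_locally p_infty) ->
  filterlim (fun x => a * f x) F (Rbar_locally p_infty).
Proof.
intros Ha Hf; eapply filterlim_comp; [exact Hf |].
replace p_infty with (Rbar_mult a p_infty) at 2; [apply filterlim_Rbar_mult_l |].
apply is_Rbar_mult_unique, is_Rbar_mult_sym, is_Rbar_mult_p_infty_pos; exact Ha.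
Qed.

Lemma filterlim_neg_ln_at_right0 (a : R) : a < 0 ->
  filterlim (fun x => a * ln x) (at_right 0) (Rbar_locally p_infty).
Proof.
intros Ha; eapply filterlim_comp; [exact is_lim_ln_0 |].
replace p_infty with (Rbar_mult a m_infty); [apply filterlim_Rbar_mult_l |].
apply is_Rbar_mult_unique, is_Rbar_mult_sym, is_Rbar_mult_m_infty_neg; exact Ha.
Qed.

Lemma filterlim_at_right_continuous (g : R -> R) x :
  continuous g x -> filterlim g (at_right x) (locally (g x)).
Proof. intros Hg; eapply filterlim_filter_le_1; [apply filter_le_within | exact Hg]. Qed.

Lemma at_right0_unit_interval : at_right 0 (fun x => 0 < x < 1).
Proof.
exists (mkposreal 1 Rlt_0_1); intros y Hy Hy0.
apply Rabs_lt_between' in Hy; simpl in Hy; lra.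
Qed.

Lemma filterlim_div_at_right0 (f : R -> R) l : is_derive f 0 l -> f 0 = 0 ->
  filterlim (fun x => f x / x) (at_right 0) (locally l).
Proof.
intros Hf Hf0; apply is_derive_Reals in Hf; apply filterlim_locally; intros e.
destruct (Hf e (cond_pos e)) as [del Hdel]; exists del; intros y Hy Hy0.
apply Rabs_lt_between' in Hy; simpl in Hy.
specialize (Hdel y ltac:(lra) ltac:(apply Rabs_def1; lra)).
rewrite Rplus_0_l, Hf0, Rminus_0_r in Hdel; exact Hdel.
Qed.

Section DecreasingChart.
Variables (r dr rho_of : R -> R).
Hypothesis Hr : forall x, 0 < x < 1 -> is_derive r x (dr x).
Hypothesis Hdr : forall x, 0 < x < 1 -> dr x < 0.

Lemma chart_decreasing x y : 0 < x -> x < y -> y < 1 -> r y < r x.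
Proof.
intros Hx Hxy Hy.
enough (- r x < - r y) by lra.
apply (incr_function (fun z => - r z) 0 1 (fun z => - dr z)); simpl; try lra.
- intros z Hz0 Hz1; apply (is_derive_opp r), Hr; lra.
- intros z Hz0 Hz1; pose proof (Hdr z (conj Hz0 Hz1)); lra.
Qed.

Lemma chart_ivt a b y : 0 < a -> a < b -> b < 1 -> r b <= y <= r a ->
  exists z, a <= z <= b /\ r z = y.
Proof.
intros Ha Hab Hb Hy.
destruct (Req_dec y (r a)) as [-> | Hya]; [exists a; split; [lra | reflexivity] |].
destruct (Req_dec y (r b)) as [-> | Hyb]; [exists b; split; [lra | reflexivity] |].
destruct (IVT_interv (fun z => y - r z) a b) as [z [Hz Hz0]]; try lra.
- intros z Hz; apply continuity_pt_minus; [apply continuity_pt_const; intros ? ?; reflexivity |].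
  apply continuity_pt_filterlim, (ex_derive_continuous r).
  exists (dr z); apply Hr; lra.
- exists z; split; [exact Hz | lra].
Qed.

Lemma chart_image_nbhd x : 0 < x < 1 ->
  locally (r x) (fun s => exists z, 0 < z < 1 /\ r z = s).
Proof.
intros Hx.
assert (H1 : r ((1 + x) / 2) < r x) by (apply chart_decreasing; lra).
assert (H2 : r x < r (x / 2)) by (apply chart_decreasing; lra).
assert (He : 0 < Rmin (r x - r ((1 + x) / 2)) (r (x / 2) - r x)) by (apply Rmin_pos; lra).
exists (mkposreal _ He); intros s Hs.
apply Rabs_lt_between' in Hs; simpl in Hs.
pose proof (Rmin_l (r x - r ((1 + x) / 2)) (r (x / 2) - r x)).
pose proof (Rmin_r (r x - r ((1 + x) / 2)) (r (x / 2) - r x)).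
destruct (chart_ivt (x / 2) ((1 + x) / 2) s) as [z [Hz Hzs]]; try lra.
exists z; split; [lra | exact Hzs].
Qed.

Hypothesis Hinv : forall x, 0 < x < 1 -> rho_of (r x) = x.

Lemma is_derive_chart_inverse x : 0 < x < 1 -> is_derive rho_of (r x) (/ dr x).
Proof.
intros Hx; set (a := x / 2); set (b := (1 + x) / 2).
assert (Hab : a < b) by (unfold a, b; lra).
assert (Henc : r b < r x < r a) by (split; apply chart_decreasing; unfold a, b; lra).
assert (Himg : forall y, r b <= y -> y <= r a -> exists z, a <= z <= b /\ r z = y)
  by (intros; apply chart_ivt; unfold a, b in *; lra).
assert (Hid : forall y, r b <= y -> y <= r a -> comp r rho_of y = id y).
{ intros y Hy1 Hy2; destruct (Himg y Hy1 Hy2) as [z [Hz <-]].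
  unfold comp, id; rewrite Hinv; [reflexivity | unfold a, b in *; lra]. }
assert (Hrange : forall y, r b <= y -> y <= r a -> a <= rho_of y <= b).
{ intros y Hy1 Hy2; destruct (Himg y Hy1 Hy2) as [z [Hz <-]].
  rewrite Hinv; [exact Hz | unfold a, b in *; lra]. }
assert (Hdecr : forall y z, a <= y -> y < z -> z <= b -> r z < r y)
  by (intros; apply chart_decreasing; unfold a, b in *; lra).
assert (Hder : forall y, a <= y <= b -> derivable_pt r y).
{ intros y Hy; apply ex_derive_Reals_0; exists (dr y); apply Hr; unfold a, b in *; lra. }
assert (Hlim : derivable_pt_lim r (rho_of (r x)) (dr x))
  by (rewrite Hinv by exact Hx; apply is_derive_Reals, Hr, Hx).
assert (Hdx := Hdr x Hx).
assert (Hnz : derive_pt r (rho_of (r x))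
   (derivable_pt_recip_interv_prelim1_decr r rho_of a b (r x) Hab Henc Hrange Hder) <> 0)
  by (rewrite (derive_pt_eq_0 _ _ (dr x) _ Hlim); lra).
pose proof (derive_pt_recip_interv_decr r rho_of a b (r x) Hab Henc Hdecr Hrange Hder Hid Hnz) as E.
rewrite (derive_pt_eq_0 _ _ (dr x) _ Hlim) in E.
apply is_derive_Reals; eapply derive_pt_eq_1; rewrite E; field; lra.
Qed.

Lemma is_derive_comp_chart_inverse h dh x : 0 < x < 1 -> is_derive h x dh ->
  is_derive (fun s => h (rho_of s)) (r x) (dh / dr x).
Proof.
intros Hx Hh; eapply is_derive_comp_R.
- rewrite Hinv by exact Hx; exact Hh.
- apply is_derive_chart_inverse, Hx.
- unfold Rdiv; ring.
Qed.

Hypothesis Hunb : filterlim r (at_right 0) (Rbar_locally p_infty).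

Lemma chart_onto_tail x0 : 0 < x0 < 1 -> forall s, r x0 < s -> exists z, 0 < z <= x0 /\ r z = s.
Proof.
intros Hx0 s Hs.
destruct (Hunb (fun y => s < y)) as [e He]; [exists s; tauto |].
pose proof (cond_pos e); pose proof (Rmin_l (e / 2) (x0 / 2)); pose proof (Rmin_r (e / 2) (x0 / 2)).
assert (Hpos : 0 < Rmin (e / 2) (x0 / 2)) by (apply Rmin_pos; lra).
set (x1 := Rmin (e / 2) (x0 / 2)) in *.
assert (Hrx1 : s < r x1) by (apply He; [apply Rabs_lt_between'; simpl |]; lra).
destruct (chart_ivt x1 x0 s) as [z [Hz Hzs]]; try lra.
exists z; split; [lra | exact Hzs].
Qed.

Lemma chart_inverse_lim : filterlim rho_of (Rbar_locally p_infty) (at_right 0).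
Proof.
intros P [e HP].
pose proof (cond_pos e); pose proof (Rmin_l (e / 2) (1 / 2)); pose proof (Rmin_r (e / 2) (1 / 2)).
assert (Hx0 : 0 < Rmin (e / 2) (1 / 2)) by (apply Rmin_pos; lra).
set (x0 := Rmin (e / 2) (1 / 2)) in *.
exists (r x0); intros s Hs.
destruct (chart_onto_tail x0 ltac:(lra) s Hs) as [z [Hz <-]].
unfold filtermap; rewrite Hinv by lra.
apply HP; [apply Rabs_lt_between'; simpl |]; lra.
Qed.

Lemma chart_inverse_eventually : Rbar_locally p_infty (fun s => r (rho_of s) = s).
Proof.
exists (r (1 / 2)); intros s Hs.
destruct (chart_onto_tail (1 / 2) ltac:(lra) s Hs) as [z [Hz <-]].
rewrite Hinv by lra; reflexivity.
Qed.
End DecreasingChart.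

Lemma euler_lagrange_of_bps (n kappa : R) (W dW V phi A : R -> R) (s : R) :
  n <> 1 ->
  locally s (fun t => is_derive phi t (dW (phi t))) ->
  locally s (fun t => is_derive A t (- kappa ^ 2 / (n - 1) * W (phi t))) ->
  is_derive W (phi s) (dW (phi s)) -> ex_derive dW (phi s) ->
  locally (phi s) (fun y => V y = / 2 * (dW y ^ 2 - n * kappa ^ 2 / (n - 1) * W y ^ 2)) ->
  ex_derive (Derive phi) s /\ ex_derive (Derive A) s /\ ex_derive V (phi s) /\
  Derive (Derive phi) s + n * Derive A s * Derive phi s = Derive V (phi s) /\
  (n - 1) * Derive (Derive A) s = - kappa ^ 2 * Derive phi s ^ 2 /\
  n * (n - 1) / 2 * Derive A s ^ 2 = kappa ^ 2 * (/ 2 * Derive phi s ^ 2 - V (phi s)).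
Proof.
intros Hn Hphi HA HW HdW HV.
assert (Hn1 : n - 1 <> 0) by (intros E; apply Hn; lra).
set (dW' := Derive dW (phi s)).
assert (HdW' : is_derive dW (phi s) dW') by (apply Derive_correct, HdW).
assert (Dphi : Derive phi s = dW (phi s)) by apply is_derive_unique, (locally_singleton _ _ Hphi).
assert (DA : Derive A s = - kappa ^ 2 / (n - 1) * W (phi s))
  by apply is_derive_unique, (locally_singleton _ _ HA).
assert (D2phi : is_derive (Derive phi) s (dW (phi s) * dW')).
{ apply (is_derive_ext_loc (fun t => dW (phi t))).
  - apply (filter_imp _ _ (fun t Ht => eq_sym (is_derive_unique _ _ _ Ht)) Hphi).
  - eapply is_derive_comp_R; [exact HdW' | exact (locally_singleton _ _ Hphi) | reflexivity]. }
assert (D2A : is_derive (Derive A) s (dW (phi s) * (- kappa ^ 2 / (n - 1) * dW (phi s)))).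
{ apply (is_derive_ext_loc (fun t => - kappa ^ 2 / (n - 1) * W (phi t))).
  - apply (filter_imp _ _ (fun t Ht => eq_sym (is_derive_unique _ _ _ Ht)) HA).
  - eapply (is_derive_comp_R (fun y => - kappa ^ 2 / (n - 1) * W y) phi);
      [apply (is_derive_scal W), HW | exact (locally_singleton _ _ Hphi) | reflexivity]. }
assert (DV : is_derive V (phi s) (dW (phi s) * dW' - n * kappa ^ 2 / (n - 1) * W (phi s) * dW (phi s))).
{ apply (is_derive_ext_loc (fun y => / 2 * (dW y ^ 2 - n * kappa ^ 2 / (n - 1) * W y ^ 2))).
  - apply (filter_imp _ _ (fun y Hy => eq_sym Hy) HV).
  - auto_derive; [repeat split; [exact HdW | exists (dW (phi s)); exact HW] |].
    change (fun x => W x) with W; change (fun x => dW x) with dW.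
    rewrite (is_derive_unique _ _ _ HW); fold dW'; field; exact Hn1. }
rewrite Dphi, DA, (is_derive_unique _ _ _ D2phi), (is_derive_unique _ _ _ D2A),
  (is_derive_unique _ _ _ DV), (locally_singleton _ _ HV).
repeat split; try (eexists; eassumption); field; exact Hn1.
Qed.

Definition qroot (x : R) : R := Rpower (1 - x ^ 2) (/ 4).

Lemma qroot_pos x : 0 < qroot x.
Proof. apply exp_pos. Qed.

Lemma qroot_pow4 x : -1 < x < 1 -> qroot x ^ 4 = 1 - x ^ 2.
Proof.
intros Hx; rewrite <- (Rpower_pow 4 (qroot x)) by apply qroot_pos.
unfold qroot; rewrite Rpower_mult.
replace (/ 4 * INR 4) with 1 by (simpl; field); apply Rpower_1; nra.
Qed.

Lemma sqrt_qroot x : -1 < x < 1 -> sqrt (1 - x ^ 2) = qroot x ^ 2.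
Proof.
intros Hx; rewrite <- qroot_pow4 by exact Hx.
replace (qroot x ^ 4) with ((qroot x ^ 2) ^ 2) by ring.
apply sqrt_pow2, pow_le, Rlt_le, qroot_pos.
Qed.

Lemma Rpower_qroot x : Rpower (1 - x ^ 2) (- (3 / 4)) * qroot x ^ 3 = 1.
Proof.
rewrite <- (Rpower_pow 3 (qroot x)) by apply qroot_pos.
unfold qroot; rewrite Rpower_mult, <- Rpower_plus.
replace (- (3 / 4) + / 4 * INR 3) with 0 by (simpl; field).
unfold Rpower; rewrite Rmult_0_l; apply exp_0.
Qed.

Definition radicands_pos (nu x : R) : Prop :=
  -1 < x < 1 /\ 0 < 1 + 2 * nu * x + x ^ 2 /\ 0 < 1 + nu * x.

Lemma radicands_pos_unit nu x : -1 <= nu -> 0 <= x < 1 -> radicands_pos nu x.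
Proof. intros; repeat split; nra. Qed.

Definition Nq (nu x : R) : R := 1 + nu * x + Sq nu x.
Definition Tq (nu x : R) : R := sqrt (2 * Nq nu x).

Section Radicals.
Variables (nu x : R).
Hypothesis Hx : radicands_pos nu x.

Lemma Sq_pos : 0 < Sq nu x.
Proof. apply sqrt_lt_R0, Hx. Qed.

Lemma Sq_sqr : Sq nu x ^ 2 = 1 + 2 * nu * x + x ^ 2.
Proof. apply pow2_sqrt, Rlt_le, Hx. Qed.

Lemma Nq_pos : 0 < Nq nu x.
Proof. pose proof Sq_pos; unfold Nq; destruct Hx as (_ & _ & ?); lra. Qed.

Lemma Tq_pos : 0 < Tq nu x.
Proof. pose proof Nq_pos; apply sqrt_lt_R0; lra. Qed.

Lemma Tq_sqr : Tq nu x ^ 2 = 2 * (1 + nu * x + Sq nu x).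
Proof. pose proof Nq_pos; apply pow2_sqrt; unfold Nq in *; lra. Qed.

End Radicals.

Ltac radical_facts nu x Hx :=
  pose proof (Sq_pos nu x Hx); pose proof (Sq_sqr nu x Hx);
  pose proof (Tq_pos nu x Hx); pose proof (Tq_sqr nu x Hx);
  pose proof (qroot_pos x); pose proof (qroot_pow4 x (proj1 Hx)); pose proof (sqrt_pos (1 - x ^ 2));
  pose proof (proj1 Hx); pose proof (proj1 (proj2 Hx)); pose proof (proj2 (proj2 Hx)).

Ltac clear_except_R_equations :=
  repeat match goal with
  | H : ?T |- _ =>
      match type of T with
      | Prop => lazymatch T with @eq R _ _ => fail | _ => clear H end
      end
  end.

(* After clearing denominators, the goal is a polynomial consequence of the relations for
   q, S, T (and P q^3 = 1 for P = (1 - x^2)^(-3/4)); nsatz certifies it, but only sees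
   through unfolded powers and gets lost on non-equational hypotheses. *)
Ltac radical_identity :=
  field_simplify_eq; [clear_except_R_equations; cbn [pow] in *; nsatz | side_conditions].

Ltac fold_radicals nu x :=
  repeat change (x * (x * 1)) with (x ^ 2);
  repeat change (1 + - x ^ 2) with (1 - x ^ 2);
  repeat change (exp (- (3 / 4) * ln (1 - x ^ 2))) with (Rpower (1 - x ^ 2) (- (3 / 4)));
  repeat change (sqrt (1 + 2 * nu * x + x ^ 2)) with (Sq nu x);
  repeat change (sqrt (2 * (1 + nu * x + Sq nu x))) with (Tq nu x);
  repeat change (exp (/ 4 * ln (1 - x ^ 2))) with (qroot x).

Section Model.
Variables (d : nat) (kappa l nu : R).
Hypotheses (Hd : (2 <= d)%nat) (Hkappa : 0 < kappa) (Hl : 0 < l) (Hnu : -1 <= nu).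

Lemma INR_d_ge2 : 2 <= INR d.
Proof. apply (le_INR 2), Hd. Qed.

Lemma kcoef_pos : 0 < kcoef d kappa.
Proof. pose proof INR_d_ge2; apply sqrt_lt_R0, Rdiv_lt_0_compat; nra. Qed.

Lemma kcoef_sqr : kcoef d kappa ^ 2 * (INR d - 1) = INR d * kappa ^ 2.
Proof.
pose proof INR_d_ge2; unfold kcoef; rewrite pow2_sqrt; [field; lra |].
apply Rlt_le, Rdiv_lt_0_compat; nra.
Qed.

Lemma phi_rho_atanh x : phi_rho d kappa x = 3 / 2 * / kcoef d kappa * atanh x.
Proof.
pose proof INR_d_ge2; unfold phi_rho, kcoef; rewrite <- sqrt_inv.
do 3 f_equal; field; split; nra.
Qed.

Lemma rho_of_phi_rho x : -1 < x < 1 -> rho_of_phi d kappa (phi_rho d kappa x) = x.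
Proof.
intros Hx; pose proof kcoef_pos; unfold rho_of_phi; rewrite phi_rho_atanh.
replace (2 / 3 * kcoef d kappa * (3 / 2 * / kcoef d kappa * atanh x)) with (atanh x)
  by (field; lra).
apply tanh_atanh, Hx.
Qed.

Lemma phi_rho_pos x : 0 < x < 1 -> 0 < phi_rho d kappa x.
Proof.
intros Hx; pose proof kcoef_pos; pose proof (atanh_pos x Hx).
rewrite phi_rho_atanh; positivity.
Qed.

Lemma is_derive_phi_rho x : -1 < x < 1 ->
  is_derive (phi_rho d kappa) x (3 / 2 * / kcoef d kappa / (1 - x ^ 2)).
Proof.
intros Hx; apply (is_derive_ext (fun y => 3 / 2 * / kcoef d kappa * atanh y)).
- intros y; symmetry; apply phi_rho_atanh.
- apply (is_derive_scal atanh), is_derive_atanh, Hx.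
Qed.

Lemma rho_of_phi_bounds phi : 0 < phi -> 0 < rho_of_phi d kappa phi < 1.
Proof.
intros Hphi; pose proof kcoef_pos; split.
- apply tanh_pos; positivity.
- apply tanh_bounds.
Qed.

Definition W_rho (rho : R) : R :=
  - (INR d - 1) / (kappa ^ 2 * l) * Rpower (1 - rho ^ 2) (- (3 / 4))
  * (1 - rho ^ 2 + Sq nu rho) / Tq nu rho.

Definition dW_rho (rho : R) : R :=
  - (INR d - 1) / (kappa ^ 2 * l) * (3 / 2 * rho * Sq nu rho / (qroot rho ^ 7 * Tq nu rho)).

Lemma is_derive_W_rho rho : radicands_pos nu rho -> is_derive W_rho rho (dW_rho rho).
Proof.
intros Hr; radical_facts nu rho Hr.
unfold W_rho, Tq, Nq, Sq, Rpower; auto_derive; fold_radicals nu rho.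
- side_conditions.
- pose proof (Rpower_qroot rho); unfold dW_rho; radical_identity.
Qed.

Definition dWsup (phi : R) : R :=
  let rho := rho_of_phi d kappa phi in dW_rho rho * (2 / 3 * kcoef d kappa * (1 - rho ^ 2)).

Lemma is_derive_Wsup phi : 0 < phi -> is_derive (Wsup d kappa l nu) phi (dWsup phi).
Proof.
intros Hphi; pose proof (rho_of_phi_bounds phi Hphi).
apply (is_derive_ext (fun y => W_rho (tanh (2 / 3 * kcoef d kappa * y)))); [reflexivity |].
eapply (is_derive_comp_R W_rho (fun y => tanh (2 / 3 * kcoef d kappa * y))).
- apply is_derive_W_rho, radicands_pos_unit; [exact Hnu | unfold rho_of_phi in *; lra].
- eapply (is_derive_comp_R tanh (fun y => 2 / 3 * kcoef d kappa * y)).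
  + apply is_derive_tanh.
  + apply is_derive_linear.
  + reflexivity.
- unfold dWsup, rho_of_phi; ring.
Qed.

Lemma ex_derive_dW_chain rho : radicands_pos nu rho ->
  ex_derive (fun x => dW_rho x * (2 / 3 * kcoef d kappa * (1 - x ^ 2))) rho.
Proof.
intros Hr; radical_facts nu rho Hr.
unfold dW_rho, Tq, Nq, Sq, qroot, Rpower; auto_derive; fold_radicals nu rho; side_conditions.
Qed.

Lemma ex_derive_dWsup phi : 0 < phi -> ex_derive dWsup phi.
Proof.
intros Hphi; pose proof (rho_of_phi_bounds phi Hphi).
apply (ex_derive_comp (fun x => dW_rho x * (2 / 3 * kcoef d kappa * (1 - x ^ 2)))
  (fun y => tanh (2 / 3 * kcoef d kappa * y))).
- apply ex_derive_dW_chain, radicands_pos_unit; [exact Hnu | unfold rho_of_phi in *; lra].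
- apply (ex_derive_comp tanh (fun y => 2 / 3 * kcoef d kappa * y)).
  + eexists; apply is_derive_tanh.
  + eexists; apply is_derive_linear.
Qed.

Lemma Vpot_superpotential phi : 0 < phi ->
  Vpot d kappa l phi
  = / 2 * (dWsup phi ^ 2 - INR d * kappa ^ 2 / (INR d - 1) * Wsup d kappa l nu phi ^ 2).
Proof.
intros Hphi; pose proof (rho_of_phi_bounds phi Hphi).
pose proof INR_d_ge2; pose proof kcoef_pos; pose proof kcoef_sqr.
unfold Vpot; rewrite cosh_tanh.
change (tanh (2 / 3 * kcoef d kappa * phi)) with (rho_of_phi d kappa phi).
change (Wsup d kappa l nu phi) with (W_rho (rho_of_phi d kappa phi)).
unfold dWsup, W_rho, dW_rho.
set (rho := rho_of_phi d kappa phi) in *.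
assert (Hr : radicands_pos nu rho) by (apply radicands_pos_unit; lra).
rewrite sqrt_qroot by lra.
pose proof (Rpower_qroot rho); radical_facts nu rho Hr.
radical_identity.
Qed.

Lemma sqrt_g_rhorho x : 0 < x < 1 ->
  sqrt (g_rhorho d l nu x) = 3 * l * Tq nu x / (2 * INR d * x * qroot x * Sq nu x).
Proof.
intros Hx; assert (Hr : radicands_pos nu x) by (apply radicands_pos_unit; lra).
radical_facts nu x Hr; pose proof INR_d_ge2.
unfold g_rhorho; rewrite sqrt_qroot by lra.
apply sqrt_lem_1; [apply Rlt_le; positivity | apply Rlt_le; positivity | radical_identity].
Qed.

Lemma sqrt_g_rhorho_pos x : 0 < x < 1 -> 0 < sqrt (g_rhorho d l nu x).
Proof.
intros Hx; assert (Hr : radicands_pos nu x) by (apply radicands_pos_unit; lra).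
radical_facts nu x Hr; pose proof INR_d_ge2.
rewrite sqrt_g_rhorho by exact Hx; positivity.
Qed.

Lemma phi_rho_bps x : 0 < x < 1 ->
  3 / 2 * / kcoef d kappa / (1 - x ^ 2) / - sqrt (g_rhorho d l nu x)
  = dWsup (phi_rho d kappa x).
Proof.
intros Hx; assert (Hr : radicands_pos nu x) by (apply radicands_pos_unit; lra).
radical_facts nu x Hr; pose proof INR_d_ge2; pose proof kcoef_pos; pose proof kcoef_sqr.
unfold dWsup, dW_rho; rewrite rho_of_phi_rho, sqrt_g_rhorho by lra.
radical_identity.
Qed.

Definition A_reg (x : R) : R := ln (sqrt (1 - x ^ 2)) + ln (Nq nu x) - ln 2.

Definition dA_rho (x : R) : R :=
  -3 * (1 - x ^ 2 + Sq nu x) / (2 * INR d * x * (1 - x ^ 2) * Sq nu x).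

Lemma A_rho_reg c x : 0 < c -> 0 < x < 1 ->
  A_rho d nu c x = ln c + 3 / (2 * INR d) * (A_reg x - 2 * ln x).
Proof.
intros Hc Hx; assert (Hr : radicands_pos nu x) by (apply radicands_pos_unit; lra).
pose proof (Nq_pos nu x Hr); pose proof INR_d_ge2.
assert (0 < sqrt (1 - x ^ 2)) by (apply sqrt_lt_R0; nra).
unfold A_rho, g_xx, A_reg, Rpower; unfold Nq in *.
rewrite ln_mult, ln_exp, ln_pow, ln_mult, ln_div, ln_mult, ln_pow; try positivity.
simpl INR; field; lra.
Qed.

Lemma A_reg_0 : A_reg 0 = 0.
Proof.
unfold A_reg, Nq, Sq.
replace (1 - 0 ^ 2) with 1 by ring; replace (1 + 2 * nu * 0 + 0 ^ 2) with 1 by ring.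
rewrite sqrt_1, ln_1; replace (1 + nu * 0 + 1) with 2 by ring; ring.
Qed.

Lemma A_reg_lim : filterlim A_reg (at_right 0) (locally 0).
Proof.
assert (Hcont : continuous A_reg 0).
{ apply (ex_derive_continuous A_reg); unfold A_reg, Nq, Sq; auto_derive.
  replace (1 + 2 * nu * 0 + 0 * (0 * 1)) with 1 by ring.
  replace (1 + - (0 * (0 * 1))) with 1 by ring.
  rewrite sqrt_1; repeat split; lra. }
pose proof (filterlim_at_right_continuous _ _ Hcont) as Hlim.
rewrite A_reg_0 in Hlim; exact Hlim.
Qed.

Lemma is_derive_A_rho c x : 0 < c -> 0 < x < 1 -> is_derive (A_rho d nu c) x (dA_rho x).
Proof.
intros Hc Hx.
apply (is_derive_ext_loc (fun y => ln c + 3 / (2 * INR d) * (A_reg y - 2 * ln y))).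
- apply (filter_imp (fun y => 0 < y < 1)); [intros y Hy; symmetry; apply A_rho_reg; auto |].
  apply (open_and (fun y => 0 < y) (fun y => y < 1)); [apply open_gt | apply open_lt | exact Hx].
- assert (Hr : radicands_pos nu x) by (apply radicands_pos_unit; lra).
  radical_facts nu x Hr; pose proof INR_d_ge2.
  unfold A_reg, Nq, Sq; auto_derive; fold_radicals nu x.
  + side_conditions.
  + rewrite sqrt_qroot by lra; unfold dA_rho; radical_identity.
Qed.

Lemma A_rho_bps x : 0 < x < 1 ->
  dA_rho x / - sqrt (g_rhorho d l nu x)
  = - kappa ^ 2 / (INR d - 1) * Wsup d kappa l nu (phi_rho d kappa x).
Proof.
intros Hx; assert (Hr : radicands_pos nu x) by (apply radicands_pos_unit; lra).
radical_facts nu x Hr; pose proof INR_d_ge2; pose proof (Rpower_qroot x).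
change (Wsup d kappa l nu (phi_rho d kappa x)) with (W_rho (rho_of_phi d kappa (phi_rho d kappa x))).
unfold dA_rho, W_rho; rewrite rho_of_phi_rho, sqrt_g_rhorho by lra.
radical_identity.
Qed.
End Model.

Section Solution.
Variables (d : nat) (kappa l nu c : R).
Hypotheses (Hd : (2 <= d)%nat) (Hkappa : 0 < kappa) (Hl : 0 < l) (Hnu : -1 <= nu) (Hc : 0 < c).
Variables (r rho_of : R -> R).
Hypothesis Hr : radial_coord d l nu r.
Hypothesis Hinv : forall x, 0 < x < 1 -> rho_of (r x) = x.

Lemma radial_coord_deriv_neg x : 0 < x < 1 -> - sqrt (g_rhorho d l nu x) < 0.
Proof. intros Hx; pose proof (sqrt_g_rhorho_pos d l nu Hd Hl Hnu x Hx); lra. Qed.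

Lemma bps_phi x : 0 < x < 1 ->
  is_derive (fun s => phi_rho d kappa (rho_of s)) (r x) (dWsup d kappa l nu (phi_rho d kappa x)).
Proof.
intros Hx; rewrite <- phi_rho_bps by assumption.
apply (is_derive_comp_chart_inverse r _ rho_of Hr radial_coord_deriv_neg Hinv); [exact Hx |].
apply is_derive_phi_rho; auto; lra.
Qed.

Lemma bps_A x : 0 < x < 1 ->
  is_derive (fun s => A_rho d nu c (rho_of s)) (r x)
    (- kappa ^ 2 / (INR d - 1) * Wsup d kappa l nu (phi_rho d kappa x)).
Proof.
intros Hx; rewrite <- A_rho_bps by assumption.
apply (is_derive_comp_chart_inverse r _ rho_of Hr radial_coord_deriv_neg Hinv); [exact Hx |].
apply is_derive_A_rho; assumption.
Qed.

Lemma solution_field_equations x : 0 < x < 1 ->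
  let A := fun s => A_rho d nu c (rho_of s) in
  let phi := fun s => phi_rho d kappa (rho_of s) in
  let W := Wsup d kappa l nu in
  let V := Vpot d kappa l in
  let s := r x in
  is_derive A s (- kappa ^ 2 / (INR d - 1) * W (phi s)) /\
  ex_derive W (phi s) /\
  is_derive phi s (Derive W (phi s)) /\
  ex_derive (Derive phi) s /\ ex_derive (Derive A) s /\ ex_derive V (phi s) /\
  Derive (Derive phi) s + INR d * Derive A s * Derive phi s = Derive V (phi s) /\
  (INR d - 1) * Derive (Derive A) s = - kappa ^ 2 * (Derive phi s) ^ 2 /\
  INR d * (INR d - 1) / 2 * (Derive A s) ^ 2
    = kappa ^ 2 * (/ 2 * (Derive phi s) ^ 2 - V (phi s)).
Proof.
intros Hx A phi W V s.
assert (Hphi : phi s = phi_rho d kappa x) by (unfold phi, s; rewrite Hinv; auto).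
assert (Hpos : 0 < phi s) by (rewrite Hphi; apply phi_rho_pos; assumption).
assert (HW : is_derive W (phi s) (dWsup d kappa l nu (phi s))) by (apply is_derive_Wsup; assumption).
assert (Hnear : locally s (fun t => exists z, 0 < z < 1 /\ r z = t))
  by (apply (chart_image_nbhd r _ Hr radial_coord_deriv_neg), Hx).
split; [rewrite Hphi; apply bps_A, Hx |].
split; [eexists; exact HW |].
split; [rewrite (is_derive_unique _ _ _ HW), Hphi; apply bps_phi, Hx |].
apply (euler_lagrange_of_bps (INR d) kappa W (dWsup d kappa l nu) V phi A s).
- pose proof (INR_d_ge2 d Hd); lra.
- eapply filter_imp; [| exact Hnear]; intros t [z [Hz <-]].
  unfold phi; rewrite Hinv by exact Hz; apply bps_phi, Hz.
- eapply filter_imp; [| exact Hnear]; intros t [z [Hz <-]].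
  unfold phi; rewrite Hinv by exact Hz; apply bps_A, Hz.
- exact HW.
- apply ex_derive_dWsup; assumption.
- eapply filter_imp; [intros y Hy; apply Vpot_superpotential; eassumption |].
  apply (open_gt 0 (phi s) Hpos).
Qed.

Hypothesis Hnorm : radial_normalized d l nu c r.

Definition radial_defect (x : R) : R := A_rho d nu c x - r x / l.

Lemma radial_coord_unbounded : filterlim r (at_right 0) (Rbar_locally p_infty).
Proof.
pose proof (INR_d_ge2 d Hd).
apply (filterlim_ext_loc (fun x =>
  l * ((ln c + 3 / (2 * INR d) * A_reg nu x + -1 * radial_defect x) + - (3 / INR d) * ln x))).
- eapply filter_imp; [| exact at_right0_unit_interval]; intros x Hx.
  unfold radial_defect; rewrite A_rho_reg by assumption; field; lra.
- apply filterlim_scal_p_infty; [exact Hl |].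
  apply (filterlim_Rplus_p_infty _ _ (ln c + 3 / (2 * INR d) * 0 + -1 * 0)).
  + apply filterlim_Rplus; [apply filterlim_Rplus; [apply filterlim_const |] |];
      apply filterlim_Rmult; try apply filterlim_const.
    * apply A_reg_lim.
    * exact Hnorm.
  + apply filterlim_neg_ln_at_right0.
    enough (0 < 3 / INR d) by lra; apply Rdiv_lt_0_compat; lra.
Qed.

Lemma phi_profile_expand x : 0 < x < 1 ->
  phi_rho d kappa x * exp (INR d * r x / (3 * l))
  = 3 / 2 * / kcoef d kappa * (atanh x / x)
    * (Rpower c (INR d / 3) * (exp (/ 2 * A_reg nu x) * exp (- (INR d / 3) * radial_defect x))).
Proof.
intros Hx; pose proof (INR_d_ge2 d Hd); pose proof (kcoef_pos d kappa Hd Hkappa).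
replace (INR d * r x / (3 * l))
  with (INR d / 3 * ln c + / 2 * A_reg nu x + - (INR d / 3) * radial_defect x + - ln x).
- rewrite (phi_rho_atanh d kappa Hd Hkappa), !exp_plus, exp_Ropp, exp_ln by lra.
  unfold Rpower; rewrite (Rmult_comm (INR d / 3)); field; lra.
- unfold radial_defect; rewrite A_rho_reg by assumption; field; lra.
Qed.

Lemma phi_profile_lim :
  filterlim (fun x => phi_rho d kappa x * exp (INR d * r x / (3 * l))) (at_right 0)
    (locally (3 / 2 * / kcoef d kappa * Rpower c (INR d / 3))).
Proof.
eapply filterlim_ext_loc.
{ eapply filter_imp; [| exact at_right0_unit_interval]; intros x Hx.
  symmetry; apply phi_profile_expand, Hx. }
replace (3 / 2 * / kcoef d kappa * Rpower c (INR d / 3)) with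
  (3 / 2 * / kcoef d kappa * 1
   * (Rpower c (INR d / 3) * (exp (/ 2 * 0) * exp (- (INR d / 3) * 0))))
  by (rewrite !Rmult_0_r, exp_0; ring).
apply filterlim_Rmult; [apply filterlim_Rmult; [apply filterlim_const |] |].
- apply filterlim_div_at_right0; [| exact atanh_0].
  replace 1 with (/ (1 - 0 ^ 2)) by (simpl; field); apply is_derive_atanh; lra.
- apply filterlim_Rmult; [apply filterlim_const | apply filterlim_Rmult].
  + apply (filterlim_comp _ _ _ (A_reg nu) (fun y => exp (/ 2 * y)) _ (locally 0));
      [apply A_reg_lim |].
    apply (ex_derive_continuous (fun y => exp (/ 2 * y))); auto_derive; exact I.
  + apply (filterlim_comp _ _ _ radial_defect (fun y => exp (- (INR d / 3) * y)) _ (locally 0));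
      [exact Hnorm |].
    apply (ex_derive_continuous (fun y => exp (- (INR d / 3) * y))); auto_derive; exact I.
Qed.

Lemma phi_asymptotics : exists phim : R,
  filterlim (fun s => phi_rho d kappa (rho_of s) * exp (INR d * s / (3 * l)))
    (Rbar_locally p_infty) (locally phim) /\
  c = Rpower (2 / 3 * kcoef d kappa * phim) (3 / INR d).
Proof.
pose proof (INR_d_ge2 d Hd); pose proof (kcoef_pos d kappa Hd Hkappa).
exists (3 / 2 * / kcoef d kappa * Rpower c (INR d / 3)); split.
- set (profile := fun x => phi_rho d kappa x * exp (INR d * r x / (3 * l))).
  apply (filterlim_ext_loc (fun s => profile (rho_of s))).
  + eapply filter_imp; [| exact (chart_inverse_eventually r _ rho_of Hr Hinv radial_coord_unbounded)].
    intros s Hs; unfold profile; rewrite Hs; reflexivity.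
  + eapply filterlim_comp; [exact (chart_inverse_lim r _ rho_of Hr Hinv radial_coord_unbounded) |].
    exact phi_profile_lim.
- replace (2 / 3 * kcoef d kappa * (3 / 2 * / kcoef d kappa * Rpower c (INR d / 3)))
    with (Rpower c (INR d / 3)) by (field; lra).
  rewrite Rpower_mult; replace (INR d / 3 * (3 / INR d)) with 1 by (field; lra).
  rewrite Rpower_1; [reflexivity | exact Hc].
Qed.
End Solution.

Section Existence.
Variables (d : nat) (l nu c : R).
Hypotheses (Hd : (2 <= d)%nat) (Hl : 0 < l) (Hnu : -1 <= nu) (Hc : 0 < c).

(* An open interval around 0 on which every radicand stays positive, so that [Kreg] is continuous
   at 0 and its integral from 0 is differentiable on (0, 1). *)
Definition near0_domain (x : R) : Prop := - / (2 * (Rabs nu + 2)) < x < 1.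

Lemma near0_domain_0 : near0_domain 0.
Proof. pose proof (Rabs_pos nu); split; [apply Ropp_lt_gt_0_contravar, Rinv_0_lt_compat |]; lra. Qed.

Lemma near0_domain_radicands x : near0_domain x -> radicands_pos nu x.
Proof.
intros [Hx1 Hx2]; pose proof (Rabs_pos nu); pose proof (Rle_abs nu); pose proof (Rle_abs (- nu)).
rewrite Rabs_Ropp in *.
assert (Hx : - / 4 < x).
{ enough (/ (2 * (Rabs nu + 2)) <= / 4) by lra; apply Rinv_le_contravar; lra. }
destruct (Rle_lt_dec 0 x) as [Hx0 | Hx0]; [apply radicands_pos_unit; lra |].
assert (Hnux : - / 2 < nu * x).
{ enough (Rabs nu * / (2 * (Rabs nu + 2)) < / 2) by nra.
  apply (Rmult_lt_reg_r (2 * (Rabs nu + 2))); [lra |].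
  rewrite Rmult_assoc, Rinv_l by lra; lra. }
repeat split; nra.
Qed.

Lemma near0_domain_open x : near0_domain x -> locally x near0_domain.
Proof. apply (open_and (fun y => _ < y) (fun y => y < 1)); [apply open_gt | apply open_lt]. Qed.

(* [sqrt g_rhorho = 3 l / d * (1 / x + Kreg x)], i.e. [Kreg = (T - 2 q S) / (2 x q S)];
   the numerator [(T ^ 2 - 4 q ^ 2 S ^ 2) / x] is rationalised so that nothing cancels at [x = 0]. *)
Definition Kreg_num (x : R) : R :=
  4 * x * (1 + 2 * nu * x + x ^ 2) / (1 + sqrt (1 - x ^ 2)) - 6 * nu - 4 * x
  + 2 * (2 * nu + x) / (1 + Sq nu x).

Definition Kreg (x : R) : R :=
  Kreg_num x / (2 * qroot x * Sq nu x * (Tq nu x + 2 * qroot x * Sq nu x)).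

Lemma continuous_Kreg x : near0_domain x -> continuous Kreg x.
Proof.
intros Hx; apply (ex_derive_continuous Kreg).
pose proof (near0_domain_radicands x Hx) as Hr; radical_facts nu x Hr.
unfold Kreg, Kreg_num, Tq, Nq, Sq, qroot, Rpower; auto_derive; fold_radicals nu x.
side_conditions.
Qed.

Definition Kint (x : R) : R := RInt Kreg 0 x.

Lemma is_derive_Kint x : near0_domain x -> is_derive Kint x (Kreg x).
Proof.
intros Hx; apply (is_derive_RInt Kreg Kint 0 x); [| apply continuous_Kreg, Hx].
eapply filter_imp; [| apply near0_domain_open, Hx]; intros b Hb.
apply (RInt_correct Kreg 0 b), ex_RInt_continuous; intros z Hz; apply continuous_Kreg.
pose proof near0_domain_0 as H0; unfold near0_domain in *.
destruct (Rle_lt_dec 0 b).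
- rewrite Rmin_left, Rmax_right in Hz; lra.
- rewrite Rmin_right, Rmax_left in Hz; lra.
Qed.

Definition radial_FG (x : R) : R := l * ln c - 3 * l / INR d * (ln x + Kint x).

Lemma radial_FG_coord : radial_coord d l nu radial_FG.
Proof.
intros x Hx.
assert (Hdom : near0_domain x) by (pose proof near0_domain_0; unfold near0_domain in *; lra).
pose proof (is_derive_Kint x Hdom) as HK; pose proof (INR_d_ge2 d Hd).
unfold radial_FG; auto_derive.
- repeat split; [lra | exists (Kreg x); exact HK].
- change (fun y => Kint y) with Kint; rewrite (is_derive_unique _ _ _ HK).
  rewrite (sqrt_g_rhorho d l nu Hd Hl Hnu x Hx).
  assert (Hr : radicands_pos nu x) by (apply radicands_pos_unit; lra).
  radical_facts nu x Hr; unfold Kreg, Kreg_num; rewrite sqrt_qroot by lra.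
  radical_identity.
Qed.

Lemma radial_FG_normalized : radial_normalized d l nu c radial_FG.
Proof.
pose proof (INR_d_ge2 d Hd); unfold radial_normalized.
apply (filterlim_ext_loc (fun x => 3 / (2 * INR d) * A_reg nu x + 3 / INR d * Kint x)).
- eapply filter_imp; [| exact at_right0_unit_interval]; intros x Hx.
  rewrite A_rho_reg by assumption; unfold radial_FG; field; lra.
- replace (locally 0) with (locally (3 / (2 * INR d) * 0 + 3 / INR d * 0)) by (f_equal; ring).
  apply filterlim_Rplus; apply filterlim_Rmult; try apply filterlim_const.
  + apply A_reg_lim.
  + replace 0 with (Kint 0) at 2 by (unfold Kint; rewrite RInt_point; reflexivity).
    apply filterlim_at_right_continuous, (ex_derive_continuous Kint).
    exists (Kreg 0); apply is_derive_Kint, near0_domain_0.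
Qed.
End Existence.

Theorem mainTheorem6 (d : nat) (kappa l nu c : R)
  (Hd : (2 <= d)%nat) (Hkappa : 0 < kappa) (Hl : 0 < l) (Hnu : -1 <= nu) (Hc : 0 < c) :
  (* a normalised proper radial coordinate exists *)
  (exists r : R -> R, radial_coord d l nu r /\ radial_normalized d l nu c r) /\
  (forall (r rho_of : R -> R),
     radial_coord d l nu r ->
     (forall rho, 0 < rho < 1 -> rho_of (r rho) = rho) ->
     let A := fun s => A_rho d nu c (rho_of s) in
     let phi := fun s => phi_rho d kappa (rho_of s) in
     let W := Wsup d kappa l nu in
     let V := Vpot d kappa l in
     (forall rho, 0 < rho < 1 ->
        let s := r rho in
        (* first-order (BPS) equations *)
        is_derive A s (- kappa ^ 2 / (INR d - 1) * W (phi s)) /\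
        ex_derive W (phi s) /\
        is_derive phi s (Derive W (phi s)) /\
        (* Euler-Lagrange equations of S for the ansatz dr^2 + e^{2A(r)} dx^i dx^i *)
        ex_derive (Derive phi) s /\ ex_derive (Derive A) s /\ ex_derive V (phi s) /\
        Derive (Derive phi) s + INR d * Derive A s * Derive phi s = Derive V (phi s) /\
        (INR d - 1) * Derive (Derive A) s = - kappa ^ 2 * (Derive phi s) ^ 2 /\
        INR d * (INR d - 1) / 2 * (Derive A s) ^ 2
          = kappa ^ 2 * (/ 2 * (Derive phi s) ^ 2 - V (phi s))) /\
     (* asymptotics and the value of c *)
     (radial_normalized d l nu c r ->
        exists phim : R,
          filterlim (fun s => phi s * exp (INR d * s / (3 * l)))
                    (Rbar_locally p_infty) (locally phim) /\
          c = Rpower (2 / 3 * kcoef d kappa * phim) (3 / INR d))).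
Proof.
split.
- exists (radial_FG d l nu c); split; [apply radial_FG_coord | apply radial_FG_normalized]; assumption.
- intros r rho_of Hr Hinv A phi W V; split.
  + exact (solution_field_equations d kappa l nu c Hd Hkappa Hl Hnu Hc r rho_of Hr Hinv).
  + exact (phi_asymptotics d kappa l nu c Hd Hkappa Hl Hnu Hc r rho_of Hr Hinv).
Qed.
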